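(* Let $G$ be a simplicial group acting on a simplicial set $X$, let $g\in G_1$ be a loop, and let $\sigma\in X_n$. Then for any $0\le m\le n$ and $0\le k\le n+1$, \[ P^{n+1}_k\bigl(A^m_g(\sigma)\bigr)=\begin{cases}(-1)^k\,(1\otimes A^{m-k}_g)\,P^n_k(\sigma)&\text{if }k\le m,\\(A^m_g\otimes1)\,P^n_{k-1}(\sigma)&\text{if }k>m.\end{cases} \]
   Context: Chains are normalized. A loop is a $1$-simplex $g$ with $\partial_0g=\partial_1g=1_0$. For $I=\{i_1<\dots<i_r\}$ write $s_I=s_{i_r}\circ\dots\circ s_{i_1}$, and $[n]=\{0,\dots,n\}$. For a loop $g$ and $0\le m\le n$, $A^m_g\colon C_n(X)\to C_{n+1}(X)$ is $\sigma\mapsto(s_{[n]\setminus m}\,g)\cdot s_m\sigma$ (here $s_{[n]\setminus m}g$ means $s_I g$ for $I=[n]\setminus\{m\}$). For $0\le k\le n$, $P^n_k\colon C_n(X)\to C_k(X)\otimes C_{n-k}(X)$, $\sigma\mapsto\sigma(0,\dots,k)\otimes\sigma(k,\dots,n)$ (front and back faces); tensor products of maps follow the Koszul sign rule. *)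

From mathcomp Require Import all_boot all_order all_algebra.
From mathcomp Require Import boolp.
Set Implicit Arguments. Unset Strict Implicit. Unset Printing Implicit Defensive.
Import GRing.Theory Num.Theory.
Local Open Scope ring_scope.

(* Simplicial sets, presented as graded sets: the carrier is the disjoint    *)
(* union of all X_n, [sdim x] is the n with x in X_n, and face/degeneracy     *)
(* operators are given for every index; the axioms (simplicial identities)   *)
(* are only imposed for valid indices.                                      *)
Record sSet := SSet {
  ssort :> Type;
  sdim : ssort -> nat;
  face : nat -> ssort -> ssort;
  degen : nat -> ssort -> ssort;
  sdim_face : forall i x, (0 < sdim x)%N -> (i <= sdim x)%N -> sdim (face i x) = (sdim x).-1;
  sdim_degen : forall i x, (i <= sdim x)%N -> sdim (degen i x) = (sdim x).+1;
  face_face : forall n i j x, sdim x = n.+2 -> (i < j)%N -> (j <= n.+2)%N ->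
    face i (face j x) = face j.-1 (face i x);
  face_degen_lt : forall n i j x, sdim x = n -> (i < j)%N -> (j <= n)%N ->
    face i (degen j x) = degen j.-1 (face i x);
  face_degen_eq : forall n j x, sdim x = n -> (j <= n)%N ->
    face j (degen j x) = x /\ face j.+1 (degen j x) = x;
  face_degen_gt : forall n i j x, sdim x = n -> (j.+1 < i)%N -> (i <= n.+1)%N ->
    face i (degen j x) = degen j (face i.-1 x);
  degen_degen : forall n i j x, sdim x = n -> (i <= j)%N -> (j <= n)%N ->
    degen i (degen j x) = degen j.+1 (degen i x)
}.

Record sGroup := SGroup {
  gset :> sSet;
  gmul : gset -> gset -> gset;
  gone : nat -> gset;
  ginv : gset -> gset;
  sdim_gone : forall n, sdim (gone n) = n;
  sdim_gmul : forall x y, sdim x = sdim y -> sdim (gmul x y) = sdim x;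
  sdim_ginv : forall x, sdim (ginv x) = sdim x;
  gmulA : forall x y z, sdim x = sdim y -> sdim y = sdim z ->
    gmul x (gmul y z) = gmul (gmul x y) z;
  gmul1 : forall x, gmul (gone (sdim x)) x = x /\ gmul x (gone (sdim x)) = x;
  gmulV : forall x, gmul (ginv x) x = gone (sdim x) /\ gmul x (ginv x) = gone (sdim x);
  face_gmul : forall i x y, sdim x = sdim y -> (0 < sdim x)%N -> (i <= sdim x)%N ->
    face i (gmul x y) = gmul (face i x) (face i y);
  degen_gmul : forall i x y, sdim x = sdim y -> (i <= sdim x)%N ->
    degen i (gmul x y) = gmul (degen i x) (degen i y)
}.

Record sAction (G : sGroup) (X : sSet) := SAction {
  act :> G -> X -> X;
  sdim_act : forall g x, sdim g = sdim x -> sdim (act g x) = sdim x;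
  act1 : forall x, act (gone G (sdim x)) x = x;
  actM : forall g h x, sdim g = sdim x -> sdim h = sdim x ->
    act (gmul g h) x = act g (act h x);
  face_act : forall i g x, sdim g = sdim x -> (0 < sdim x)%N -> (i <= sdim x)%N ->
    face i (act g x) = act (face i g) (face i x);
  degen_act : forall i g x, sdim g = sdim x -> (i <= sdim x)%N ->
    degen i (act g x) = act (degen i g) (degen i x)
}.

Definition is_loop (G : sGroup) (g : G) : Prop :=
  sdim g = 1%N /\ face 0 g = gone G 0 /\ face 1 g = gone G 0.

(* sexcl m n g = s_{[n] \ m} g = s_{i_r} o ... o s_{i_1} g, where            *)
(*   {i_1 < ... < i_r} = [n] \ {m}; computed by recursion on n:             *)
Fixpoint sfull (X : sSet) (n : nat) (x : X) : X :=
  if n is n'.+1 then degen n' (sfull n' x) else x.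

Fixpoint sexcl (X : sSet) (m n : nat) (x : X) : X :=
  if n is n'.+1 then
    (if m == n then sfull n x else degen n (sexcl m n' x))
  else x.

(* Normalized chains with integer coefficients.  A chain is a formal finite  *)
(* Z-linear combination of simplices; two chains are equal in the            *)
(* normalized chain complex iff they have the same coefficient on every      *)
(* non-degenerate simplex (degenerate simplices are zero).  Similarly        *)
(* C(X) (x) C(X) is free on pairs of non-degenerate simplices.              *)
Definition chain (T : Type) := seq (int * T).

Definition gen (T : Type) (x : T) : chain T := [:: (1, x)].

Definition scale (T : Type) (a : int) (c : chain T) : chain T :=
  [seq (a * p.1, p.2) | p <- c].

Definition coef (T : Type) (c : chain T) (b : T) : int :=
  \sum_(p <- c) (if asbool (p.2 = b) then p.1 else 0).

Definition degenerate (X : sSet) (x : X) : Prop :=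
  exists i (y : X), (i <= sdim y)%N /\ x = degen i y.

Definition ceq (X : sSet) (c c' : chain X) : Prop :=
  forall b : X, ~ degenerate b -> coef c b = coef c' b.

Definition teq (X : sSet) (c c' : chain (X * X)) : Prop :=
  forall b1 b2 : X, ~ degenerate b1 -> ~ degenerate b2 ->
    coef c (b1, b2) = coef c' (b1, b2).

Definition lin (T U : Type) (f : T -> chain U) (c : chain T) : chain U :=
  flatten [seq scale p.1 (f p.2) | p <- c].

Definition tens (T : Type) (c1 c2 : chain T) : chain (T * T) :=
  [seq (p.1 * q.1, (p.2, q.2)) | p <- c1, q <- c2].

(* Tensor product of maps with the Koszul sign rule:
   (f (x) h)(x (x) y) = (-1)^(|h| |x|) f(x) (x) h(y), with |h| = degh. *)
Definition tmap (X : sSet) (f h : X -> chain X) (degh : nat)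
    (t : chain (X * X)) : chain (X * X) :=
  lin (fun xy : X * X =>
         scale ((-1) ^+ (degh * sdim xy.1)) (tens (f xy.1) (h xy.2))) t.

Definition idc (X : sSet) : X -> chain X := @gen X.

Definition Aop (G : sGroup) (X : sSet) (a : sAction G X) (m : nat) (g : G)
    (sigma : X) : X :=
  a (sexcl m (sdim sigma) g) (degen m sigma).

Definition Amap (G : sGroup) (X : sSet) (a : sAction G X) (m : nat) (g : G) :
    X -> chain X := fun sigma => gen (Aop a m g sigma).

(* front face sigma(0,...,k) and back face sigma(k,...,n) *)
Definition front (X : sSet) (k : nat) (sigma : X) : X :=
  iter (sdim sigma - k) (fun x => face (sdim x) x) sigma.
Definition back (X : sSet) (k : nat) (sigma : X) : X :=
  iter k (face 0) sigma.

Definition Pmap (X : sSet) (k : nat) (sigma : X) : chain (X * X) :=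
  gen (front k sigma, back k sigma).

(* For a loop g, d_0 s_{[n]\0} g = 1 and d_{n+1} s_{[n]} g = 1, whence
   d_0 A^0_g = id and d_{n+1} A^n_g = id, while d_0 A^{m+1}_g = A^m_g d_0 and
   d_{n+1} A^m_g = A^m_g d_n (m < n) are simplicial identities.  Iterating,
   the front and back faces of A^m_g(sigma) are those of sigma, except that
   exactly one of them still carries an A: the back face (with m lowered by k)
   if k <= m, the front face otherwise.  When k <= m the Koszul sign (-1)^k of
   1 (x) A^{m-k}_g cancels the explicit (-1)^k, so both sides agree as formal
   combinations, before normalization. *)
From mathcomp Require Import all_boot all_order all_algebra.
Set Implicit Arguments. Unset Strict Implicit.
Import GRing.Theory.

Section Chains.
Local Open Scope ring_scope.

Lemma scale1 (T : Type) (c : chain T) : scale 1 c = c.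
Proof. by rewrite /scale (eq_map (g := id)) ?map_id // => -[a x]; rewrite mul1r. Qed.

Lemma scale_scale (T : Type) (a b : int) (c : chain T) :
  scale a (scale b c) = scale (a * b) c.
Proof. by rewrite /scale -map_comp; apply: eq_map => -[c1 x]; rewrite /= mulrA. Qed.

Lemma lin_gen (T U : Type) (f : T -> chain U) (x : T) : lin f (gen x) = f x.
Proof. by rewrite /lin /= cats0 scale1. Qed.

Lemma tens_gen (T : Type) (x y : T) : tens (gen x) (gen y) = gen (x, y).
Proof. by rewrite /tens /= mulr1. Qed.

End Chains.

Lemma tmap_gen (X : sSet) (f h : X -> chain X) (d : nat) (x y : X) :
  tmap f h d (gen (x, y)) = scale ((-1) ^+ (d * sdim x)) (tens (f x) (h y)).
Proof. exact: lin_gen. Qed.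

Section IteratedDegeneracies.
Variable X : sSet.
Implicit Types x : X.

Lemma sdim_sfull n x : sdim (sfull n x) = sdim x + n.
Proof.
elim: n => [|n IH] /=; first by rewrite addn0.
by rewrite sdim_degen IH ?addnS // leq_addl.
Qed.

Lemma sexclnn m x : sexcl m m x = sfull m x.
Proof. by case: m => //= m; rewrite eqxx. Qed.

Lemma sexclS m n x : m <= n -> sexcl m n.+1 x = degen n.+1 (sexcl m n x).
Proof. by move=> hmn /=; rewrite ifN // neq_ltn ltnS hmn. Qed.

Lemma sdim_sexcl m n x : 0 < sdim x -> m <= n -> sdim (sexcl m n x) = sdim x + n.
Proof.
move=> x_pos; elim: n => [|n IH]; first by rewrite leqn0 => /eqP-> /=; rewrite addn0.
rewrite leq_eqVlt => /predU1P[->|hmn]; first by rewrite sexclnn sdim_sfull.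
by rewrite sexclS // sdim_degen (IH hmn) ?addnS // -add1n leq_add2r.
Qed.

Lemma face0_sfull m x : face 0 (sfull m.+1 x) = sfull m x.
Proof.
elim: m => [|m IH]; first exact: (face_degen_eq (erefl (sdim x)) (leq0n _)).1.
rewrite [sfull m.+2 x]/= (face_degen_lt (erefl (sdim (sfull m.+1 x)))) ?IH //.
by rewrite sdim_sfull leq_addl.
Qed.

Lemma face0_sexclS m n x : 0 < sdim x -> m <= n ->
  face 0 (sexcl m.+1 n.+1 x) = sexcl m n x.
Proof.
move=> x_pos; elim: n => [|n IH]; first by rewrite leqn0 => /eqP->; rewrite !sexclnn face0_sfull.
rewrite leq_eqVlt => /predU1P[->|hmn]; first by rewrite !sexclnn face0_sfull.
have hdim : n.+1 < sdim (sexcl m.+1 n.+1 x) by rewrite sdim_sexcl // -add1n leq_add2r.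
by rewrite sexclS // (face_degen_lt (erefl _) _ hdim) // (IH hmn) -sexclS.
Qed.

Lemma face_sexclS m n x : 0 < sdim x -> m <= n ->
  face n.+2 (sexcl m n.+1 x) = sexcl m n x.
Proof.
move=> x_pos hmn; rewrite sexclS //.
by rewrite (face_degen_eq (sdim_sexcl x_pos hmn) _).2 // -add1n leq_add2r.
Qed.

End IteratedDegeneracies.

Lemma gmul_idem (G : sGroup) (e : G) : gmul e e = e -> e = gone G (sdim e).
Proof.
move=> ee; have [eVe _] := gmulV e.
have : gmul (ginv e) (gmul e e) = gmul (ginv e) e by rewrite ee.
by rewrite gmulA ?sdim_ginv // eVe (gmul1 e).1.
Qed.

Lemma degen_gone (G : sGroup) i n : i <= n -> degen i (gone G n) = gone G n.+1.
Proof.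
move=> hi; have de : sdim (degen i (gone G n)) = n.+1 by rewrite sdim_degen sdim_gone.
rewrite -de; apply: gmul_idem.
rewrite -degen_gmul ?sdim_gone //.
by have := (gmul1 (gone G n)).1; rewrite sdim_gone => ->.
Qed.

Section LoopDegeneracies.
Variables (G : sGroup) (g : G).
Hypothesis g_loop : is_loop g.

Lemma sdim_loop : sdim g = 1.
Proof. by case: g_loop. Qed.

Lemma face0_sexcl0 n : face 0 (sexcl 0 n g) = gone G n.
Proof.
have [g1 [g_face0 _]] := g_loop.
elim: n => [//|n IH]; rewrite sexclS // (face_degen_lt (erefl _)) ?IH ?degen_gone //.
by rewrite sdim_sexcl ?g1.
Qed.

Lemma face_last_sexclnn n : face n.+1 (sexcl n n g) = gone G n.
Proof.
have [g1 [_ g_face1]] := g_loop; rewrite sexclnn.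
elim: n => [//|n IH] /=; rewrite (face_degen_gt (n := n.+1)) ?IH ?degen_gone //.
by rewrite sdim_sfull g1.
Qed.

End LoopDegeneracies.

Section FrontAndBackFaces.
Variable X : sSet.
Implicit Types s : X.

Lemma front_sdim s : front (sdim s) s = s.
Proof. by rewrite /front subnn. Qed.

Lemma front_face_last k s : k < sdim s -> front k (face (sdim s) s) = front k s.
Proof.
case E: (sdim s) => [//|n] hk.
by rewrite /front sdim_face E // subSn // iterSr E.
Qed.

Lemma sdim_front k s : k <= sdim s -> sdim (front k s) = k.
Proof.
have [n] := ubnP (sdim s); elim: n s => // n IH s hs.
rewrite leq_eqVlt => /predU1P[->|hk]; first by rewrite front_sdim.
have s_pos : 0 < sdim s by apply: leq_ltn_trans hk.
by rewrite -front_face_last // IH // sdim_face // -ltnS prednK.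
Qed.

Lemma backS k s : back k.+1 s = face 0 (back k s).
Proof. by []. Qed.

Lemma backSr k s : back k.+1 s = back k (face 0 s).
Proof. exact: iterSr. Qed.

Lemma backD j k s : back (j + k) s = back j (back k s).
Proof. exact: iterD. Qed.

End FrontAndBackFaces.

Section FacesOfA.
Variables (G : sGroup) (X : sSet) (a : sAction G X) (g : G).
Hypothesis g_loop : is_loop g.
Implicit Types s : X.

Let g1 := sdim_loop g_loop.

Lemma sdim_sexcl_loop m n : m <= n -> sdim (sexcl m n g) = n.+1.
Proof. by move=> hmn; rewrite sdim_sexcl ?g1. Qed.

Lemma sdim_Aop m s : m <= sdim s -> sdim (Aop a m g s) = (sdim s).+1.
Proof. by move=> hm; rewrite /Aop sdim_act sdim_degen ?sdim_sexcl_loop. Qed.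

Lemma face0_AopS m s : m < sdim s -> face 0 (Aop a m.+1 g s) = Aop a m g (face 0 s).
Proof.
case E: (sdim s) => [//|n] hmn.
rewrite /Aop E face_act ?sdim_degen ?E ?sdim_sexcl_loop // face0_sexclS ?g1 //.
by rewrite (face_degen_lt E) // sdim_face ?E.
Qed.

Lemma face0_Aop0 s : face 0 (Aop a 0 g s) = s.
Proof.
rewrite /Aop face_act ?sdim_degen ?sdim_sexcl_loop // face0_sexcl0 //.
by rewrite (face_degen_eq (erefl _) (leq0n _)).1 act1.
Qed.

Lemma face_last_Aop m s : m < sdim s ->
  face (sdim s).+1 (Aop a m g s) = Aop a m g (face (sdim s) s).
Proof.
case E: (sdim s) => [//|n] hmn.
rewrite /Aop E face_act ?sdim_degen ?E ?sdim_sexcl_loop ?(ltnW hmn) //.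
rewrite face_sexclS ?g1 //.
by rewrite (face_degen_gt E) // sdim_face ?E.
Qed.

Lemma face_last_Aopnn s : face (sdim s).+1 (Aop a (sdim s) g s) = s.
Proof.
rewrite /Aop face_act ?sdim_degen ?sdim_sexcl_loop // face_last_sexclnn //.
by rewrite (face_degen_eq (erefl _) (leqnn _)).2 act1.
Qed.

Lemma front_Aop_le k m s : k <= m -> m <= sdim s -> front k (Aop a m g s) = front k s.
Proof.
have [n] := ubnP (sdim s); elim: n s => // n IH s hs hkm.
rewrite leq_eqVlt => /predU1P[m_top|hms].
  by subst m; rewrite -front_face_last sdim_Aop ?face_last_Aopnn ?ltnS.
have hks : k < sdim s := leq_ltn_trans hkm hms.
have s_pos : 0 < sdim s := leq_ltn_trans (leq0n k) hks.
have hd : sdim (face (sdim s) s) = (sdim s).-1 by rewrite sdim_face.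
rewrite -front_face_last sdim_Aop ?ltnS ?(leq_trans (ltnW hks)) ?(ltnW hms) //.
by rewrite face_last_Aop // IH ?front_face_last // hd -ltnS prednK.
Qed.

Lemma front_Aop_gt k m s : m < k -> k <= (sdim s).+1 ->
  front k (Aop a m g s) = Aop a m g (front k.-1 s).
Proof.
have [n] := ubnP (sdim s); elim: n s => // n IH s hs hmk.
rewrite leq_eqVlt ltnS => /predU1P[k_top|hk].
  by subst k; rewrite /= front_sdim -{1}(sdim_Aop hmk) front_sdim.
have hms : m < sdim s := leq_trans hmk hk.
have s_pos : 0 < sdim s := leq_ltn_trans (leq0n m) hms.
have hd : sdim (face (sdim s) s) = (sdim s).-1 by rewrite sdim_face.
rewrite -front_face_last sdim_Aop ?ltnS ?(ltnW hms) // face_last_Aop // IH ?hd ?prednK //.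
by rewrite front_face_last // -ltnS prednK // (leq_ltn_trans (leq0n m)).
Qed.

Lemma back_Aop_le k m s : k <= m -> m <= sdim s ->
  back k (Aop a m g s) = Aop a (m - k) g (back k s).
Proof.
elim: k m s => [|k IH] m s hkm hms; first by rewrite subn0.
case: m hkm hms => // m hkm hms.
have s_pos : 0 < sdim s by apply: leq_trans hms.
by rewrite !backSr face0_AopS // IH // sdim_face // -ltnS prednK.
Qed.

Lemma back_Aop_gt k m s : m < k -> m <= sdim s -> back k (Aop a m g s) = back k.-1 s.
Proof.
move=> hmk hms.
by rewrite -(subnK hmk) backD backS back_Aop_le // subnn face0_Aop0 -backD addnS.
Qed.

End FacesOfA.

Local Open Scope ring_scope.

Theorem lemma8p1 (G : sGroup) (X : sSet) (a : sAction G X) (g : G)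
    (hg : is_loop g) (n : nat) (sigma : X) (hsigma : sdim sigma = n)
    (m k : nat) (hm : (m <= n)%N) (hk : (k <= n.+1)%N) :
  teq (lin (@Pmap X k) (lin (Amap a m g) (gen sigma)))
      (if (k <= m)%N then
         scale ((-1) ^+ k)
           ((tmap (@idc X) (Amap a (m - k) g) 1) (lin (@Pmap X k) (gen sigma)))
       else
         tmap (Amap a m g) (@idc X) 0 (lin (@Pmap X k.-1) (gen sigma))).
Proof.
rewrite -{}hsigma in hm hk.
move=> b1 b2 _ _; congr coef.
rewrite /Amap /Pmap /idc !lin_gen !tmap_gen !tens_gen.
case: (leqP k m) => [hkm | hmk].
  rewrite front_Aop_le ?back_Aop_le // scale_scale sdim_front ?(leq_trans hkm) //.
  by rewrite mul1n -exprD -signr_odd addnn odd_double scale1.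
by rewrite front_Aop_gt ?back_Aop_gt // mul0n scale1.
Qed.
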